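(* Let $n\ge 3$ and let $c=(c_1,\dots,c_n)\in\{-1,+1\}^n$ be such that the cyclic sequence $(c_1,\dots,c_n,-c_1,\dots,-c_n)$ of length $2n$ contains no $n-1$ cyclically consecutive equal entries. Set $\varphi_1=0$, $\varphi_{n+1}=\pi$, and for $\varphi=(\varphi_2,\dots,\varphi_n)\in\mathbb{R}^{n-1}$, $y=(y_1,y_2)\in\mathbb{R}^2$ define \[ f(\varphi)=-\sum_{j=1}^{n}2\sin\frac{\varphi_{j+1}-\varphi_j}{2},\quad g_1(\varphi)=\sum_{j=2}^{n}(c_{j-1}-c_j)\cos\varphi_j-(c_1+c_n),\quad g_2(\varphi)=\sum_{j=2}^{n}(c_{j-1}-c_j)\sin\varphi_j, \] $L(\varphi,y)=f(\varphi)+y_1g_1(\varphi)+y_2g_2(\varphi)$, let $H(\varphi,y)$ be the Hessian of $L$ with respect to $(\varphi_2,\dots,\varphi_n)$, let $C(\varphi)$ be the $2\times(n-1)$ Jacobian of $(g_1,g_2)$ with respect to $(\varphi_2,\dots,\varphi_n)$, and let \[ K(\varphi,y)=\begin{pmatrix}H(\varphi,y)& C(\varphi)^T\\ C(\varphi)&0\end{pmatrix}. \] Let $w^\ast=(\varphi^\ast,0)$ with $\varphi^\ast_j=(j-1)\pi/n$ for $j=2,\dots,n$. Then $K$ is invertible at every point of some neighborhood of $w^\ast$ in $\mathbb{R}^{n-1}\times\mathbb{R}^2$. *)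

From HB Require Import structures.
From mathcomp Require Import all_boot all_order all_algebra.
From mathcomp Require Import all_classical all_reals all_analysis.
Set Implicit Arguments. Unset Strict Implicit. Unset Printing Implicit Defensive.
Import Order.TTheory GRing.Theory Num.Theory.
Import numFieldNormedType.Exports.
Local Open Scope ring_scope.

Section Defs.
Variable R : realType.
Variable n : nat.
(* c is indexed 1-based: c 1, ..., c n are the relevant entries *)
Variable c : nat -> R.

Definition cseq (k : nat) : R := if (k < n)%N then c k.+1 else - c (k - n).+1.

Definition no_long_run : Prop :=
  forall k : nat, (k < 2 * n)%N ->
    ~ (forall t : nat, (t < n - 1)%N -> cseq ((k + t) %% (2 * n)) = cseq k).

Definition vget m (v : 'rV[R]_m) (i : nat) : R :=
  match (insub i : option 'I_m) with Some j => v 0 j | None => 0 end.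

(* 1-based angles: phi_1 = 0, phi_(n+1) = pi, phi_j = v_(j-2) for 2 <= j <= n *)
Definition ang (v : 'rV[R]_(n.-1)) (j : nat) : R :=
  if (j <= 1)%N then 0 else if (j <= n)%N then vget v (j - 2) else pi.

Definition fobj (v : 'rV[R]_(n.-1)) : R :=
  - \sum_(1 <= j < n.+1) 2 * sin ((ang v j.+1 - ang v j) / 2).

Definition g1 (v : 'rV[R]_(n.-1)) : R :=
  \sum_(2 <= j < n.+1) (c j.-1 - c j) * cos (ang v j) - (c 1 + c n).

Definition g2 (v : 'rV[R]_(n.-1)) : R :=
  \sum_(2 <= j < n.+1) (c j.-1 - c j) * sin (ang v j).

Definition Lag (v : 'rV[R]_(n.-1)) (y : 'rV[R]_2) : R :=
  fobj v + y 0 0 * g1 v + y 0 1 * g2 v.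

Definition ebas (i : 'I_(n.-1)) : 'rV[R]_(n.-1) := delta_mx 0 i.

Definition Hess (v : 'rV[R]_(n.-1)) (y : 'rV[R]_2) : 'M[R]_(n.-1) :=
  \matrix_(i, j) ('D_(ebas i) ('D_(ebas j) (fun u => Lag u y)) v).

Definition Jac (v : 'rV[R]_(n.-1)) : 'M[R]_(2, n.-1) :=
  \matrix_(k < 2, j < n.-1)
    (if k == 0 then 'D_(ebas j) g1 v else 'D_(ebas j) g2 v).

Definition KKT (v : 'rV[R]_(n.-1)) (y : 'rV[R]_2) : 'M[R]_(n.-1 + 2) :=
  block_mx (Hess v y) (Jac v)^T (Jac v) 0.

Definition phistar : 'rV[R]_(n.-1) :=
  \row_(i < n.-1) ((i.+1)%:R * pi / n%:R).

End Defs.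

(* At w* = (phi*, 0) the Hessian of the Lagrangian is the Gram-type matrix
   sum_k 2 sin(pi/2n) s_k s_k^T, where s_k is the gradient of the k-th half gap
   (phi_(k+1) - phi_k)/2; it is positive definite because the gaps determine phi.
   The j-th column of the constraint Jacobian is (c_(j-1) - c_j)(-sin phi_j, cos phi_j),
   and the absence of long runs forces two sign changes of c, hence two nonzero columns
   at angles less than pi apart: the Jacobian has full rank.  A saddle-point matrix
   with definite upper-left block and full-rank constraint block is invertible, and
   invertibility persists near w* because the determinant is continuous. *)

From HB Require Import structures.
From mathcomp Require Import all_boot all_order all_algebra.
From mathcomp Require Import all_classical all_reals all_analysis.
From mathcomp Require Import ring lra zify.
Set Implicit Arguments. Unset Strict Implicit. Unset Printing Implicit Defensive.
Import Order.TTheory GRing.Theory Num.Theory.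
Import numFieldNormedType.Exports.
Local Open Scope ring_scope.

Section DirectionalDerivative.
Variables (R : realType) (V : normedModType R).

Lemma derive_along_line (W : normedModType R) (f : V -> W) x e :
  'D_e f x = 'D_1 (fun t : R => f (t *: e + x)) 0.
Proof.
rewrite /derive; set lhs := fun h => h^-1 *: _; set rhs := fun h => h^-1 *: _.
suff -> : lhs = rhs by [].
by apply/funext => h; rewrite /lhs /rhs /= addr0 scale0r add0r [_%:A]mulr1.
Qed.

Lemma is_derive_along_line (f : V -> R) x e d :
  is_derive (0 : R) 1 (fun t : R => f (t *: e + x)) d -> is_derive x e f d.
Proof.
move=> fd; split; first by apply/derivable1P; exact: ex_derive.
by rewrite derive_along_line derive_val.
Qed.

Lemma is_derive_comp_affine (h : R -> R) (l : V -> R) x e a dh :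
  (forall t, l (t *: e + x) = t * a + l x) -> is_derive (l x) 1 h dh ->
  is_derive x e (fun u => h (l u)) (dh * a).
Proof.
move=> l_affine hd; apply: is_derive_along_line.
have -> : (fun t => h (l (t *: e + x))) = h \o (fun t => t * a + l x).
  by apply/funext => t; rewrite /= l_affine.
apply: is_derive1_comp; first by rewrite mul0r add0r.
have -> : (fun t : R => t * a + l x) = a \*: id + cst (l x).
  by apply/funext => t; rewrite /= mulrC.
by apply: is_derive_eq; rewrite addr0 [_%:A]mulr1.
Qed.

Lemma is_deriveMl (f : V -> R) (k : R) x e df :
  is_derive x e f df -> is_derive x e (fun u => k * f u) (k * df).
Proof. exact: is_deriveZ. Qed.

Lemma is_derive_big (I : Type) (r : seq I) (F : I -> V -> R) (dF : I -> R) x e :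
  (forall i, is_derive x e (F i) (dF i)) ->
  is_derive x e (fun u => \sum_(i <- r) F i u) (\sum_(i <- r) dF i).
Proof.
move=> Fd; elim: r => [|i r IHr].
  under eq_fun do rewrite big_nil.
  by rewrite big_nil; exact: is_derive_cst.
under eq_fun do rewrite big_cons.
by rewrite big_cons; exact: is_deriveD.
Qed.

End DirectionalDerivative.

Lemma sum_mul_delta (R : pzSemiRingType) m (F : 'I_m -> R) (i : 'I_m) :
  \sum_(j < m) F j * (j == i)%:R = F i.
Proof.
under eq_bigr do rewrite mulr_natr mulrb.
by rewrite -big_mkcond big_pred1_eq.
Qed.

Lemma gram_quad_form (R : comPzRingType) (I : Type) m (r : seq I) (a : I -> R)
    (d : 'I_m -> I -> R) (u : 'rV[R]_m) :
  (u *m (\matrix_(i, j) \sum_(k <- r) a k * d i k * d j k) *m u^T) 0 0 =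
  \sum_(k <- r) a k * (\sum_(i < m) u 0 i * d i k) ^+ 2.
Proof.
transitivity (\sum_(j < m) \sum_(i < m) \sum_(k <- r)
    a k * ((u 0 i * d i k) * (u 0 j * d j k))).
  rewrite mxE; apply: eq_bigr => j _; rewrite !mxE mulr_suml.
  apply: eq_bigr => i _; rewrite mxE mulr_sumr mulr_suml.
  by apply: eq_bigr => k _; ring.
rewrite exchange_big /=; under eq_bigr do rewrite exchange_big /=.
rewrite exchange_big /=; apply: eq_bigr => k _.
rewrite expr2 mulr_suml mulr_sumr; apply: eq_bigr => i _.
by rewrite !mulr_sumr; apply: eq_bigr => j _; ring.
Qed.

Lemma gram_quad_form_eq0 (R : realDomainType) (I : eqType) m (r : seq I)
    (a : I -> R) (d : 'I_m -> I -> R) (u : 'rV[R]_m) :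
  (forall k, k \in r -> 0 < a k) ->
  (u *m (\matrix_(i, j) \sum_(k <- r) a k * d i k * d j k) *m u^T) 0 0 = 0 ->
  forall k, k \in r -> \sum_(i < m) u 0 i * d i k = 0.
Proof.
move=> a_gt0; rewrite gram_quad_form big_seq => /eqP.
rewrite psumr_eq0 => [/allP sq0 k kr|k kr]; last first.
  by rewrite mulr_ge0 ?sqr_ge0 // ltW ?a_gt0.
move: (sq0 k kr); rewrite kr mulf_eq0 (gt_eqF (a_gt0 k kr)) sqrf_eq0.
exact/eqP.
Qed.

Lemma saddle_point_unitmx (F : fieldType) m p (H : 'M[F]_m) (C : 'M[F]_(p, m)) :
  (forall u : 'rV_m, (u *m H *m u^T) 0 0 = 0 -> u = 0) -> row_free C ->
  block_mx H C^T C 0 \in unitmx.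
Proof.
move=> H_def C_free; rewrite -row_free_unit; apply: inj_row_free => x.
rewrite -[x]hsubmxK mul_row_block mulmx0 addr0 => /eqP.
rewrite row_mx_eq0 => /andP[/eqP uHzC /eqP uCT].
set u := lsubmx x in uHzC uCT *; set z := rsubmx x in uHzC *.
have u0 : u = 0.
  apply: H_def; have -> : u *m H = - (z *m C) by apply/eqP; rewrite -addr_eq0 uHzC.
  by rewrite mulNmx -mulmxA -[C *m u^T]trmxK trmx_mul trmxK uCT trmx0 mulmx0 oppr0 mxE.
have z0 : z = 0.
  by apply: (row_free_inj C_free); rewrite /= mul0mx -uHzC u0 mul0mx add0r.
by rewrite u0 z0 row_mx0.
Qed.

Lemma exists_step (T : eqType) (f : nat -> T) a b :
  (a <= b)%N -> f a != f b -> exists2 j, (a <= j < b)%N & f j != f j.+1.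
Proof.
elim: b => [|b IHb]; first by rewrite leqn0 => /eqP ->; rewrite eqxx.
rewrite leq_eqVlt ltnS => /orP[/eqP -> | ab]; first by rewrite eqxx.
have [fab fab1 | fab _] := eqVneq (f a) (f b).
  by exists b; rewrite ?ab ?ltnSn // -fab.
by have [j /andP[aj jb] fj] := IHb ab fab; exists j; rewrite // aj ltnS ltnW.
Qed.

Lemma sin_cos_combination_eq0 (R : realType) (z0 z1 t1 t2 : R) :
  sin (t2 - t1) != 0 ->
  z1 * cos t1 = z0 * sin t1 -> z1 * cos t2 = z0 * sin t2 -> z0 = 0 /\ z1 = 0.
Proof.
move=> s0 e1 e2; have z0s : z0 * sin (t2 - t1) = 0.
  by rewrite sinB; transitivity (cos t1 * (z0 * sin t2) - cos t2 * (z0 * sin t1));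
    [ring | rewrite -e1 -e2; ring].
have z1s : z1 * sin (t2 - t1) = 0.
  by rewrite sinB; transitivity (sin t2 * (z1 * cos t1) - sin t1 * (z1 * cos t2));
    [ring | rewrite e1 e2; ring].
by move: z0s z1s => /eqP; rewrite mulf_eq0 (negbTE s0) orbF => /eqP ->
  /eqP; rewrite mulf_eq0 (negbTE s0) orbF => /eqP ->.
Qed.

Section Lagrangian.
Variables (R : realType) (n : nat) (c : nat -> R).
Local Notation m := n.-1.
Local Notation V := 'rV[R]_m.

Definition half_gap (v : V) k := (ang v k.+1 - ang v k) / 2.

(* Coordinate [j] of [v] is the angle phi_(j+2), which enters the half gaps
   [k = j+1] and [k = j+2]. *)
Definition half_gap_slope (j : 'I_m) k : R := ((k == j.+1)%:R - (k == j.+2)%:R) / 2.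

Lemma coord_shift (i j : 'I_m) x t : (t *: ebas R i + x) 0 j = t * (j == i)%:R + x 0 j.
Proof. by rewrite !mxE eqxx. Qed.

Lemma vget_shift (j : 'I_m) x i t :
  vget (t *: ebas R j + x) i = t * (i == j)%:R + vget x i.
Proof.
rewrite /vget; case: insubP => [i' _ <- | im]; first by rewrite coord_shift.
suff /negbTE -> : i != j by rewrite mulr0 add0r.
by apply: contraNneq im => ->.
Qed.

Lemma vget_ord (v : V) (j : 'I_m) : vget v j = v 0 j.
Proof. by rewrite /vget valK. Qed.

Lemma ang_shift (j : 'I_m) x k t :
  ang (t *: ebas R j + x) k = t * (k == j.+2)%:R + ang x k.
Proof.
case: k => [|[|k]]; rewrite /ang /= ?mulr0 ?addr0 //.
case: ifP => kn; first by rewrite !subSS subn0 vget_shift.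
suff /negbTE -> : k.+2 != j.+2 by rewrite mulr0 add0r.
by apply: contraFneq kn => ->; have := ltn_ord j; lia.
Qed.

Lemma half_gap_shift (j : 'I_m) x k t :
  half_gap (t *: ebas R j + x) k = t * half_gap_slope j k + half_gap x k.
Proof. by rewrite /half_gap /half_gap_slope !ang_shift eqSS; ring. Qed.

Lemma sum_ang_interior (F : nat -> R -> R) v :
  \sum_(2 <= k < n.+1) F k (ang v k) = \sum_(j < m) F j.+2 (v 0 j).
Proof.
rewrite -[2%N]add0n big_addn big_mkord (_ : n.+1 - 2 = m)%N; last by lia.
apply: eq_bigr => j _; rewrite addn2 /ang /= ifT; last by have := ltn_ord j; lia.
by rewrite !subSS subn0 vget_ord.
Qed.

Lemma g1E v : g1 c v = \sum_(j < m) (c j.+1 - c j.+2) * cos (v 0 j) - (c 1 + c n).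
Proof. by rewrite /g1 (sum_ang_interior (fun k s => (c k.-1 - c k) * cos s)). Qed.

Lemma g2E v : g2 c v = \sum_(j < m) (c j.+1 - c j.+2) * sin (v 0 j).
Proof. by rewrite /g2 (sum_ang_interior (fun k s => (c k.-1 - c k) * sin s)). Qed.

Lemma is_derive_g1 (i : 'I_m) x :
  is_derive x (ebas R i) (g1 c) ((c i.+2 - c i.+1) * sin (x 0 i)).
Proof.
have -> : g1 c = fun v => \sum_(j < m) (c j.+1 - c j.+2) * cos (v 0 j) - (c 1 + c n).
  by apply/funext => v; rewrite g1E.
apply: is_derive_eq.
  apply: is_deriveB; apply: is_derive_big => j.
  exact: is_deriveMl (is_derive_comp_affine (coord_shift i j x) (is_derive_cos _)).
under eq_bigr do rewrite mulrA.
by rewrite sum_mul_delta; ring.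
Qed.

Lemma is_derive_g2 (i : 'I_m) x :
  is_derive x (ebas R i) (g2 c) ((c i.+1 - c i.+2) * cos (x 0 i)).
Proof.
have -> : g2 c = fun v => \sum_(j < m) (c j.+1 - c j.+2) * sin (v 0 j).
  by apply/funext => v; rewrite g2E.
apply: is_derive_eq.
  apply: is_derive_big => j.
  exact: is_deriveMl (is_derive_comp_affine (coord_shift i j x) (is_derive_sin _)).
under eq_bigr do rewrite mulrA.
by rewrite sum_mul_delta; ring.
Qed.

Definition dfobj (j : 'I_m) (x : V) : R :=
  - \sum_(1 <= k < n.+1) 2 * half_gap_slope j k * cos (half_gap x k).

Lemma is_derive_fobj (j : 'I_m) x : is_derive x (ebas R j) (@fobj R n) (dfobj j x).
Proof.
rewrite (_ : @fobj R n = fun v => - \sum_(1 <= k < n.+1) 2 * sin (half_gap v k)) //.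
apply: is_derive_eq.
  apply: is_deriveN; apply: is_derive_big => k.
  exact: is_deriveMl (is_derive_comp_affine (half_gap_shift j x k) (is_derive_sin _)).
by congr (- _); apply: eq_bigr => k _; ring.
Qed.

Definition dLag (j : 'I_m) (y : 'rV[R]_2) (x : V) : R :=
  dfobj j x + y 0 0 * ((c j.+2 - c j.+1) * sin (x 0 j))
            + y 0 1 * ((c j.+1 - c j.+2) * cos (x 0 j)).

Lemma is_derive_Lag (j : 'I_m) y x :
  is_derive x (ebas R j) (fun u => Lag c u y) (dLag j y x).
Proof.
rewrite /Lag /dLag; apply: is_deriveD; last exact/is_deriveMl/is_derive_g2.
by apply: is_deriveD; [exact: is_derive_fobj | exact/is_deriveMl/is_derive_g1].
Qed.

Lemma is_derive_dLag (i j : 'I_m) y x :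
  is_derive x (ebas R i) (dLag j y)
    (\sum_(1 <= k < n.+1) 2 * sin (half_gap x k) * half_gap_slope i k * half_gap_slope j k
     + (j == i)%:R * (c j.+2 - c j.+1) * (y 0 0 * cos (x 0 j) + y 0 1 * sin (x 0 j))).
Proof.
apply: is_derive_eq.
  apply: is_deriveD; [apply: is_deriveD|]; try do 2 apply: is_deriveMl.
  - apply: is_deriveN; apply: is_derive_big => k; apply: is_deriveMl.
    exact: is_derive_comp_affine (half_gap_shift i x k) (is_derive_cos _).
  - exact: is_derive_comp_affine (coord_shift i j x) (is_derive_sin _).
  - exact: is_derive_comp_affine (coord_shift i j x) (is_derive_cos _).
rewrite -addrA -sumrN; congr (_ + _); first by apply: eq_bigr => k _; ring.
by ring.
Qed.

Lemma HessE v y (i j : 'I_m) : Hess c v y i j =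
  \sum_(1 <= k < n.+1) 2 * sin (half_gap v k) * half_gap_slope i k * half_gap_slope j k
  + (j == i)%:R * (c j.+2 - c j.+1) * (y 0 0 * cos (v 0 j) + y 0 1 * sin (v 0 j)).
Proof.
rewrite mxE (_ : 'D_(ebas R j) (fun u => Lag c u y) = dLag j y).
  by case: (is_derive_dLag i j y v).
by apply/funext => x; case: (is_derive_Lag j y x).
Qed.

Lemma JacE v (k : 'I_2) (j : 'I_m) : Jac c v k j =
  if k == 0 then (c j.+2 - c j.+1) * sin (v 0 j) else (c j.+1 - c j.+2) * cos (v 0 j).
Proof.
by rewrite mxE; case: ifP => _; [case: (is_derive_g1 j v) | case: (is_derive_g2 j v)].
Qed.

Lemma half_gap_slope_inj (u : V) :
  (forall k, (1 <= k <= n)%N -> \sum_(i < m) u 0 i * half_gap_slope i k = 0) -> u = 0.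
Proof.
(* [U k] is u_(k-1) padded with zeros; the slope sums are its halved differences. *)
move=> u_slopes; pose U k := \sum_(i < m) u 0 i * (k == i.+1)%:R.
have slopeU k : \sum_(i < m) u 0 i * half_gap_slope i k = (U k - U k.-1) / 2.
  rewrite /U -sumrB mulr_suml; apply: eq_bigr => i _.
  by rewrite /half_gap_slope (_ : (k == i.+2) = (k.-1 == i.+1)); [ring | case: k].
have U0 k : (k <= n)%N -> U k = 0.
  elim: k => [_ | k IHk kn]; first by rewrite /U big1 // => i _; rewrite mulr0.
  have /eqP := u_slopes k.+1 kn; rewrite slopeU mulf_eq0 invr_eq0 pnatr_eq0 orbF.
  by rewrite subr_eq0 => /eqP ->; apply: IHk; apply: ltnW.
apply/rowP => i; move: (U0 i.+1 (leq_trans (ltn_ord i) (leq_pred n))).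
rewrite /U mxE; under eq_bigr do rewrite eqSS val_eqE eq_sym.
by rewrite sum_mul_delta.
Qed.

Lemma Jac_row_free (v : V) (j1 j2 : 'I_m) :
  c j1.+1 != c j1.+2 -> c j2.+1 != c j2.+2 -> sin (v 0 j2 - v 0 j1) != 0 ->
  row_free (Jac c v).
Proof.
move=> d1 d2 s12; apply: inj_row_free => z zJ0.
have col (j : 'I_m) : c j.+1 != c j.+2 -> z 0 1 * cos (v 0 j) = z 0 0 * sin (v 0 j).
  move=> dj; have /rowP/(_ j)/eqP := zJ0.
  rewrite !mxE big_ord_recl big_ord1 (_ : lift 0 0 = 1); last exact/val_inj.
  rewrite !JacE /= (_ : _ + _ = (c j.+1 - c j.+2) *
    (z 0 1 * cos (v 0 j) - z 0 0 * sin (v 0 j))); last by ring.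
  by rewrite mulf_eq0 subr_eq0 (negbTE dj) subr_eq0 => /eqP.
have [z0 z1] := sin_cos_combination_eq0 s12 (col j1 d1) (col j2 d2).
apply/rowP => k; rewrite mxE; case: k => [[|[|//]]] k2; [rewrite -z0 | rewrite -z1];
  by congr (z 0 _); apply/val_inj.
Qed.

End Lagrangian.

Section Phistar.
Variables (R : realType) (n : nat) (c : nat -> R).
Hypothesis n_gt0 : (0 < n)%N.
Local Notation m := n.-1.

Lemma ang_phistar k : (1 <= k <= n.+1)%N -> ang (phistar R n) k = k.-1%:R * pi / n%:R.
Proof.
move=> /andP[k1 kn]; rewrite /ang; case: ifP => [k_le1 | /negbT k_gt1].
  by rewrite (_ : k = 1%N) ?mul0r //; lia.
case: ifP => [k_le_n | /negbT k_gt_n].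
  have km : (k - 2 < m)%N by lia.
  by rewrite (vget_ord _ (Ordinal km)) mxE /= (_ : (k - 2).+1 = k.-1)%N //; lia.
have -> : k = n.+1 by lia.
by rewrite /= mulrAC divff ?mul1r // pnatr_eq0 -lt0n.
Qed.

Lemma sin_half_gap_phistar_gt0 k : (1 <= k <= n)%N -> 0 < sin (half_gap (phistar R n) k).
Proof.
move=> kn; have n_pos : (0 < n%:R :> R) by rewrite ltr0n.
have pi_pos := pi_gt0 R; have n_ge1 : (1 <= n%:R :> R) by rewrite ler1n.
rewrite /half_gap !ang_phistar; try lia.
rewrite (_ : k.+1.-1 = k.-1 + 1)%N ?natrD; last by lia.
rewrite (_ : _ / 2 = pi / (2 * n%:R)); last by field; rewrite gt_eqF.
apply: sin_gt0_pi; rewrite divr_gt0 ?mulr_gt0 //= ltr_pdivrMr ?mulr_gt0 //.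
nra.
Qed.

Lemma Hess_phistar_definite (u : 'rV[R]_m) :
  (u *m Hess c (phistar R n) 0 *m u^T) 0 0 = 0 -> u = 0.
Proof.
have -> : Hess c (phistar R n) 0 = \matrix_(i, j) \sum_(1 <= k < n.+1)
    2 * sin (half_gap (phistar R n) k) * half_gap_slope R i k * half_gap_slope R j k.
  by apply/matrixP => i j; rewrite HessE !mxE !mul0r addr0 mulr0 addr0.
move=> /gram_quad_form_eq0 uH0; apply: half_gap_slope_inj => k kn.
apply: uH0; last by rewrite mem_index_iota.
by move=> k'; rewrite mem_index_iota => k'n; rewrite mulr_gt0 ?sin_half_gap_phistar_gt0.
Qed.

Lemma sin_phistar_sub_gt0 (j1 j2 : 'I_m) :
  (j1 < j2)%N -> 0 < sin (phistar R n 0 j2 - phistar R n 0 j1).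
Proof.
move=> j12; have n_pos : (0 < n%:R :> R) by rewrite ltr0n.
have pi_pos := pi_gt0 R.
have j12R : ((j1.+1)%:R < (j2.+1)%:R :> R) by rewrite ltr_nat.
have j2n : ((j2.+1)%:R < n%:R :> R) by rewrite ltr_nat; have := ltn_ord j2; lia.
rewrite !mxE -!mulrBl; apply: sin_gt0_pi.
rewrite divr_gt0 ?mulr_gt0 ?subr_gt0 //= ltr_pdivrMr //.
have : (0 <= (j1.+1)%:R :> R) by []; nra.
Qed.

Lemma KKT_phistar_unitmx (j1 j2 : 'I_m) :
  (j1 < j2)%N -> c j1.+1 != c j1.+2 -> c j2.+1 != c j2.+2 ->
  KKT c (phistar R n) 0 \in unitmx.
Proof.
move=> j12 d1 d2; apply: saddle_point_unitmx; first exact: Hess_phistar_definite.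
by apply: Jac_row_free d1 d2 _; rewrite gt_eqF ?sin_phistar_sub_gt0.
Qed.

End Phistar.

Section SignChanges.
Variables (R : realType) (n : nat) (c : nat -> R).
Hypothesis c_sign : forall j : nat, (1 <= j <= n)%N -> c j = 1 \/ c j = -1.
Local Notation f := (cseq n c).

Lemma cseq_lt k : (k < n)%N -> f k = c k.+1.
Proof. by move=> kn; rewrite /cseq kn. Qed.

Lemma cseq_antiperiodic i : (i < n)%N -> f (n + i) = - f i.
Proof. by move=> i_n; rewrite /cseq ltnNge leq_addr /= addKn i_n. Qed.

Lemma cseq_neq_opp k l : (k < n)%N -> (l < n)%N -> f k != f l -> f k = - f l.
Proof.
move=> kn ln; rewrite !cseq_lt //.
by case: (c_sign (j := k.+1)); case: (c_sign (j := l.+1)); try lia;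
  move=> -> -> //; rewrite ?eqxx ?opprK.
Qed.

Lemma two_sign_changes : (0 < n)%N -> no_long_run n c ->
  exists j1 j2 : 'I_n.-1, [/\ (j1 < j2)%N, c j1.+1 != c j1.+2 & c j2.+1 != c j2.+2].
Proof.
move=> n_gt0 no_run.
have run_breaks k : (k < n)%N -> exists2 t, (t < n.-1)%N & f ((k + t) %% (2 * n)) != f k.
  move=> kn; have /existsNP[t /not_implyP[t_lt ft]] := no_run k ltac:(lia).
  by exists t; [lia | apply/eqP].
(* j1 is the first sign change; a run starting at j1+1 cannot wrap around, since
   past position n it meets -c_1 = c_(j1+2). *)
have [t t_lt ft0] := run_breaks 0%N n_gt0; rewrite add0n modn_small in ft0; last by lia.
rewrite eq_sym in ft0; have [j jt fj] := exists_step (leq0n t) ft0.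
case: (ex_minnP (ex_intro (fun j => f j != f j.+1) j fj)) => j1 fj1 j1_min.
have j1t := leq_ltn_trans (j1_min j fj) (andP jt).2.
have f_init i : (i <= j1)%N -> f i = f 0.
  move=> ij1; apply/eqP; apply: contraT; rewrite eq_sym => /(exists_step (leq0n i)).
  by case=> j' /andP[_ j'i] /j1_min; lia.
have [t' t'_lt ft'] := run_breaks j1.+1 ltac:(lia).
have [inside | wraps] := ltnP (j1.+1 + t') n.
  rewrite modn_small in ft'; last by lia.
  rewrite eq_sym in ft'; have [j2 /andP[j12 j2t] fj2] := exists_step (leq_addr t' j1.+1) ft'.
  have j1m : (j1 < n.-1)%N by lia.
  have j2m : (j2 < n.-1)%N by lia.
  exists (Ordinal j1m), (Ordinal j2m).
  by split=> //=; rewrite -cseq_lt -?cseq_lt //; lia.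
have i_lt : (j1.+1 + t' - n < n)%N by lia.
rewrite (_ : j1.+1 + t' = n + (j1.+1 + t' - n))%N ?modn_small in ft'; try lia.
rewrite cseq_antiperiodic // f_init in ft'; last by lia.
move: ft'; rewrite -(f_init j1) // (@cseq_neq_opp j1 j1.+1) ?opprK ?eqxx //; lia.
Qed.

End SignChanges.

Lemma continuous_det (R : numFieldType) (T : topologicalType) k (A : T -> 'M[R]_k) :
  (forall i j, continuous (fun x => A x i j)) -> continuous (fun x => \det (A x)).
Proof.
move=> A_cont x; rewrite /determinant; apply: cvg_big => // [|s _].
  exact: add_continuous.
apply: cvgMl_tmp; apply: cvg_big => // [|i _]; [exact: mul_continuous | exact: A_cont].
Qed.

Section PointwiseContinuity.
Variables (R : realType) (T : topologicalType) (x : T).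

Lemma continuous_sin_at (f : T -> R) :
  {for x, continuous f} -> {for x, continuous (fun y => sin (f y))}.
Proof. by move=> f_cont; exact: continuous_comp f_cont (@continuous_sin R _). Qed.

Lemma continuous_cos_at (f : T -> R) :
  {for x, continuous f} -> {for x, continuous (fun y => cos (f y))}.
Proof. by move=> f_cont; exact: continuous_comp f_cont (@continuous_cos R _). Qed.

Lemma continuous_sum_at (I : Type) (r : seq I) (F : I -> T -> R) :
  (forall i, {for x, continuous (F i)}) ->
  {for x, continuous (fun y => \sum_(i <- r) F i y)}.
Proof.
move=> F_cont; apply: cvg_big => // [|i _]; [exact: add_continuous | exact: F_cont].
Qed.

End PointwiseContinuity.

Section KKTContinuity.
Variables (R : realType) (n : nat) (c : nat -> R).
Local Notation W := ('rV[R]_n.-1 * 'rV[R]_2)%type.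
Variable w : W.

Lemma continuous_coord1_at j : {for w, continuous (fun x : W => x.1 0 j)}.
Proof.
have := continuous_cvg _ (@coord_continuous R 1 _ 0 j w.1)
  (@cvg_fst _ _ (nbhs w.1) (nbhs w.2) _).
by apply; apply: _.
Qed.

Lemma continuous_coord2_at j : {for w, continuous (fun x : W => x.2 0 j)}.
Proof.
have := continuous_cvg _ (@coord_continuous R 1 _ 0 j w.2)
  (@cvg_snd _ _ (nbhs w.1) (nbhs w.2) _).
by apply; apply: _.
Qed.

Lemma continuous_ang_at k : {for w, continuous (fun x : W => ang x.1 k)}.
Proof.
rewrite /ang; case: (k <= 1)%N; first exact: cvg_cst.
case: (k <= n)%N; last exact: cvg_cst.
by rewrite /vget; case: insub => [j|]; [exact: continuous_coord1_at | exact: cvg_cst].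
Qed.

Ltac continuity_at := repeat first
  [ apply: cvg_cst | apply: continuous_coord1_at | apply: continuous_coord2_at
  | apply: continuous_ang_at | apply: continuous_sin_at | apply: continuous_cos_at
  | apply: continuousD | apply: continuousN | apply: continuousM
  | apply: continuous_sum_at => ? ].

Lemma continuous_Hess_at i j : {for w, continuous (fun x : W => Hess c x.1 x.2 i j)}.
Proof.
have -> : (fun x : W => Hess c x.1 x.2 i j) = fun x =>
    \sum_(1 <= k < n.+1) 2 * sin (half_gap x.1 k) * half_gap_slope R i k * half_gap_slope R j k
    + (j == i)%:R * (c j.+2 - c j.+1) * (x.2 0 0 * cos (x.1 0 j) + x.2 0 1 * sin (x.1 0 j)).
  by apply/funext => x; rewrite HessE.
rewrite /half_gap; continuity_at.
Qed.

Lemma continuous_Jac_at k j : {for w, continuous (fun x : W => Jac c x.1 k j)}.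
Proof.
have -> : (fun x : W => Jac c x.1 k j) = fun x => if k == 0
    then (c j.+2 - c j.+1) * sin (x.1 0 j) else (c j.+1 - c j.+2) * cos (x.1 0 j).
  by apply/funext => x; rewrite JacE.
by case: (k == 0); continuity_at.
Qed.

End KKTContinuity.

Lemma continuous_KKT_det (R : realType) (n : nat) (c : nat -> R) :
  continuous (fun x : 'rV[R]_n.-1 * 'rV[R]_2 => \det (KKT c x.1 x.2)).
Proof.
apply: continuous_det => a b w; rewrite /KKT.
case: (split_ordP a) => {}a ->; case: (split_ordP b) => {}b ->.
- by under eq_fun do rewrite block_mxEul; exact: continuous_Hess_at.
- by under eq_fun do rewrite block_mxEur mxE; exact: continuous_Jac_at.
- by under eq_fun do rewrite block_mxEdl; exact: continuous_Jac_at.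
- by under eq_fun do rewrite block_mxEdr mxE; exact: cvg_cst.
Qed.

Theorem lemma4 (R : realType) (n : nat) (c : nat -> R)
  (hn : (3 <= n)%N)
  (hc : forall j : nat, (1 <= j <= n)%N -> c j = 1 \/ c j = -1)
  (hrun : no_long_run n c) :
  \forall w \near (@phistar R n, (0 : 'rV[R]_2)),
    @KKT R n c w.1 w.2 \in unitmx.
Proof.
have n_gt0 : (0 < n)%N by apply: leq_trans hn.
have [j1 [j2 [j12 d1 d2]]] := two_sign_changes hc n_gt0 hrun.
have : \det (KKT c (phistar R n) 0) != 0.
  by rewrite -unitfE -unitmxE (KKT_phistar_unitmx n_gt0 j12 d1 d2).
move/(cvgr_neq0 _ (@continuous_KKT_det R n c (phistar R n, 0))).
by apply: filterS => w; rewrite unitmxE unitfE.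
Qed.
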